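(* Let $A$ be a densely defined closed linear operator on a complex Banach space $X$, and let $B$ be a bounded linear operator on $X$ such that (a) $BA\subset AB$, and (b) the point spectrum of $B$ is empty. Then $A$ has no eigenvalues of finite multiplicity. *)

From HB Require Import structures.
From mathcomp Require Import all_boot all_order all_algebra.
From mathcomp Require Import all_classical all_reals all_analysis.
From mathcomp Require Import complex.
Set Implicit Arguments. Unset Strict Implicit. Unset Printing Implicit Defensive.
Import Order.TTheory GRing.Theory Num.Theory.
Import numFieldNormedType.Exports.
Local Open Scope classical_set_scope.
Local Open Scope ring_scope.

Section OpDefs.
Context {K : numFieldType} {X : normedModType K}.

Definition is_subspace (D : set X) : Prop :=
  D 0 /\ (forall (a : K) (x y : X), D x -> D y -> D (a *: x + y)).

(* an (unbounded) linear operator with domain D, represented by a total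
   function A : X -> X whose values outside D are irrelevant *)
Definition linear_on (D : set X) (A : X -> X) : Prop :=
  is_subspace D /\
  (forall (a : K) (x y : X), D x -> D y -> A (a *: x + y) = a *: A x + A y).

Definition densely_defined (D : set X) : Prop := closure D = setT.

Definition closed_operator (D : set X) (A : X -> X) : Prop :=
  closed [set p : X * X | D p.1 /\ p.2 = A p.1].

Definition bounded_linear (B : X -> X) : Prop :=
  (forall (a : K) (x y : X), B (a *: x + y) = a *: B x + B y) /\
  exists M : K, forall x : X, `|B x| <= M * `|x|.

(* B A ⊂ A B : D(BA) = D(A) ⊆ D(AB) = {x | B x ∈ D(A)} and AB = BA on D(A) *)
Definition commutes_sub (D : set X) (A B : X -> X) : Prop :=
  forall x, D x -> D (B x) /\ A (B x) = B (A x).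

Definition point_spectrum (B : X -> X) : set K :=
  [set l | exists x : X, x != 0 /\ B x = l *: x].

Definition eigenspace (D : set X) (A : X -> X) (l : K) : set X :=
  [set x | D x /\ A x = l *: x].

Definition is_eigenvalue (D : set X) (A : X -> X) (l : K) : Prop :=
  exists x : X, x != 0 /\ eigenspace D A l x.

Definition finite_dimensional (S : set X) : Prop :=
  exists (n : nat) (v : 'I_n -> X),
    forall x, S x -> exists c : 'I_n -> K, x = \sum_(i < n) c i *: v i.

Definition eigenvalue_finite_mult (D : set X) (A : X -> X) (l : K) : Prop :=
  is_eigenvalue D A l /\ finite_dimensional (eigenspace D A l).

End OpDefs.

(* B maps the eigenspace E = ker (A - l) into itself, so if E is finite
   dimensional then every x in E is killed by a nonzero polynomial in B.  Over C
   this polynomial is a product of factors B - a, each of which is injective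
   because B has no eigenvalues; hence x = 0, so E contains no eigenvector. *)
From Pilot Require Import Defs.
From HB Require Import structures.
From mathcomp Require Import all_boot all_order all_algebra.
From mathcomp Require Import all_classical all_reals all_analysis.
From mathcomp Require Import complex.
Import Order.TTheory GRing.Theory Num.Theory.
Import numFieldNormedType.Exports.
Set Implicit Arguments. Unset Strict Implicit. Unset Printing Implicit Defensive.
Local Open Scope ring_scope.

Section PolyAction.
Variables (K : fieldType) (V : lmodType K) (B : V -> V).
Hypothesis B_linear : forall (a : K) (x y : V), B (a *: x + y) = a *: B x + B y.

Lemma linear_op0 : B 0 = 0.
Proof. by have := B_linear (-1) 0 0; rewrite scaler0 addr0 scaleN1r addNr. Qed.

Lemma linear_opZ (a : K) x : B (a *: x) = a *: B x.
Proof. by have := B_linear a x 0; rewrite !addr0 linear_op0 addr0. Qed.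

Lemma iter_linear_opB k (a : K) x y :
  iter k B (x - a *: y) = iter k B x - a *: iter k B y.
Proof.
elim: k => //= k ->.
by rewrite -scaleNr addrC B_linear addrC scaleNr.
Qed.

Definition poly_act (p : {poly K}) (x : V) := \sum_(i < size p) p`_i *: iter i B x.

Lemma poly_act_widen N (p : {poly K}) x : (size p <= N)%N ->
  poly_act p x = \sum_(i < N) p`_i *: iter i B x.
Proof.
move=> hN; rewrite /poly_act (big_ord_widen N (fun i => p`_i *: iter i B x) hN).
rewrite [RHS](bigID (fun i : 'I_N => (i < size p)%N)) /=.
rewrite [X in _ = _ + X]big1 ?addr0 // => i.
by rewrite -leqNgt => hi; rewrite nth_default // scale0r.
Qed.

Lemma poly_act1 x : poly_act 1 x = x.
Proof. by rewrite /poly_act size_poly1 big_ord1 coefC /= scale1r. Qed.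

Lemma poly_actZ c (p : {poly K}) x : poly_act (c *: p) x = c *: poly_act p x.
Proof.
rewrite (@poly_act_widen (size p)) ?size_scale_leq // scaler_sumr.
by apply: eq_bigr => i _; rewrite coefZ scalerA.
Qed.

Lemma poly_act_mulXsubC (q : {poly K}) a x :
  poly_act (q * ('X - a%:P)) x = poly_act q (B x - a *: x).
Proof.
have size_qXa : (size (q * ('X - a%:P))%R <= (size q).+1)%N.
  by rewrite (leq_trans (size_polyMleq _ _)) // size_XsubC addn2.
rewrite (@poly_act_widen _ _ x size_qXa).
under eq_bigr do rewrite mulrBr coefB coefMX coefMC scalerBl.
rewrite sumrB big_ord_recl /= scale0r add0r.
have -> : \sum_(i < (size q).+1) (q`_i * a) *: iter i B x = a *: poly_act q x.
  rewrite (@poly_act_widen (size q).+1) // scaler_sumr.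
  by apply: eq_bigr => i _; rewrite scalerA mulrC.
rewrite /poly_act scaler_sumr -sumrB.
by apply: eq_bigr => i _; rewrite add0n iter_linear_opB -iterSr scalerBr !scalerA mulrC.
Qed.

End PolyAction.

Lemma poly_act_eq0_no_eigenvector (K : closedFieldType) (V : lmodType K)
    (B : V -> V) (B_linear : forall (a : K) (x y : V), B (a *: x + y) = a *: B x + B y)
    (no_eigenvector : forall (a : K) y, B y = a *: y -> y = 0)
    (p : {poly K}) x :
  p != 0 -> poly_act B p x = 0 -> x = 0.
Proof.
move=> p_neq0; have [rs ->] := closed_field_poly_normal p.
rewrite poly_actZ // => /eqP; rewrite scaler_eq0 lead_coef_eq0 (negPf p_neq0) /=.
move=> /eqP; elim: rs x => [|z rs IH] x; first by rewrite big_nil poly_act1.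
rewrite big_cons mulrC poly_act_mulXsubC // => /IH Bz_x.
by apply: (no_eigenvector z); apply/eqP; rewrite -subr_eq0 Bz_x.
Qed.

Lemma span_dependent (K : fieldType) (V : lmodType K) n
    (v : 'I_n -> V) (w : 'I_n.+1 -> V) (c : 'I_n.+1 -> 'I_n -> K) :
    (forall k, w k = \sum_(i < n) c k i *: v i) ->
  exists2 u : 'rV[K]_n.+1, u != 0 & \sum_(k < n.+1) u 0 k *: w k = 0.
Proof.
move=> w_span; pose C : 'M[K]_(n.+1, n) := \matrix_(k, i) c k i.
have kerC_neq0 : kermx C != 0.
  rewrite kermx_eq0; apply/negP => /eqP rkC.
  by have := rank_leq_col C; rewrite rkC ltnn.
exists (nz_row (kermx C)); first by rewrite nz_row_eq0.
have uC0 : nz_row (kermx C) *m C = 0 by apply/sub_kermxP; exact: nz_row_sub.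
under eq_bigr do rewrite w_span scaler_sumr.
under eq_bigr do under eq_bigr do rewrite scalerA.
rewrite exchange_big big1 // => i _; rewrite -scaler_suml.
have -> : \sum_(k < n.+1) nz_row (kermx C) 0 k * c k i = (nz_row (kermx C) *m C) 0 i.
  by rewrite mxE; apply: eq_bigr => k _; rewrite mxE.
by rewrite uC0 mxE scale0r.
Qed.

Lemma annihilating_poly_finite_dimensional (K : numFieldType) (X : normedModType K)
    (B : X -> X) (S : set X) :
    finite_dimensional S -> (forall y, S y -> S (B y)) ->
  forall x, S x -> exists2 p : {poly K}, p != 0 & poly_act B p x = 0.
Proof.
move=> [n [v S_span]] SB x Sx.
have S_iter k : S (iter k B x) by elim: k => //= k; apply: SB.
have [c iter_span] := boolp.choice (fun k : 'I_n.+1 => S_span _ (S_iter k)).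
have [u u_neq0 u_dep] := span_dependent iter_span.
exists (\poly_(k < n.+1) u 0 (inord k)).
  apply: contra u_neq0 => /eqP p0; apply/eqP/rowP => k; rewrite mxE.
  have := congr1 (fun q : {poly K} => q`_k) p0.
  by rewrite coef_poly coef0 ltn_ord inord_val.
rewrite (poly_act_widen _ _ (size_poly _ _)) -[RHS]u_dep.
by apply: eq_bigr => k _; rewrite coef_poly ltn_ord inord_val.
Qed.

Lemma eigenspace_invariant (K : numFieldType) (X : normedModType K)
    (D : set X) (A B : X -> X) (l : K) :
    (forall (a : K) (x y : X), B (a *: x + y) = a *: B x + B y) ->
    commutes_sub D A B ->
  forall x, Defs.eigenspace D A l x -> Defs.eigenspace D A l (B x).
Proof.
move=> B_linear AB_comm x [Dx Ax]; have [DBx ABx] := AB_comm x Dx.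
by split=> //; rewrite ABx Ax linear_opZ.
Qed.

Theorem lemma3p1 (R : realType) (X : completeNormedModType R[i])
    (D : set X) (A B : X -> X)
    (hA : linear_on D A) (hdense : densely_defined D)
    (hclosed : closed_operator D A)
    (hB : bounded_linear B)
    (hBA : commutes_sub D A B)
    (hpB : point_spectrum B = set0) :
  forall l : R[i], ~ eigenvalue_finite_mult D A l.
Proof.
move=> l [[x [x_neq0 Ex]] E_findim].
have [B_linear _] := hB.
have no_eigenvector (a : R[i]) y : B y = a *: y -> y = 0.
  move=> Bya; apply/eqP; apply: contraT => y_neq0.
  have : point_spectrum B a by exists y.
  by rewrite hpB.
have [p p_neq0 px0] := annihilating_poly_finite_dimensional E_findim
  (eigenspace_invariant B_linear hBA) Ex.
move/eqP: x_neq0; apply.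
exact: (poly_act_eq0_no_eigenvector B_linear no_eigenvector p_neq0 px0).
Qed.
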